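(* Let $Z=(U,\Omega,\mathcal I)$ be a $3$-matroid. The following are equivalent: (1) $Z$ is tight and binary; (2) $Z$ is tight and strictly binary; (3) $Z=\mathcal Z(Q)$ for some sheltering matroid $Q=(M,\Omega)$ such that there exist a finite set $V$, a symmetric $V\times V$ matrix $A$ over $GF(2)$, and a labelling $U=\{u_1(v),u_2(v),u_3(v): v\in V\}$ with $\Omega=\{\{u_1(v),u_2(v),u_3(v)\}: v\in V\}$, for which $M$ is the column matroid of the $GF(2)$-matrix $(I\mid A\mid A+I)$ (rows indexed by $V$) whose $v$-columns in the three blocks are labelled $u_1(v),u_2(v),u_3(v)$ respectively.
   Context: Let $\Omega$ be a partition of a finite set $U$. $T\subseteq U$ is a transversal (subtransversal) of $\Omega$ if $|T\cap\omega|=1$ ($\le 1$) for all $\omega\in\Omega$; $\mathcal S(\Omega)$ denotes the set of subtransversals. A skew pair of $\omega\in\Omega$ is a $2$-element subset of $\omega$. A multimatroid over $(U,\Omega)$ is a triple $Z=(U,\Omega,\mathcal I)$ with $\mathcal I\subseteq\mathcal S(\Omega)$ such that (i) for each transversal $T$, $\{I\in\mathcal I: I\subseteq T\}$ is the family of independent sets of a matroid on $T$, and (ii) for every $I\in\mathcal I$ and every skew pair $\{x,y\}$ of some $\omega\in\Omega$ with $\omega\cap I=\emptyset$, $I\cup\{x\}\in\mathcal I$ or $I\cup\{y\}\in\mathcal I$. $Z$ is a $q$-matroid if every $\omega\in\Omega$ has size $q$; it is nondegenerate if every $\omega$ has size $>1$. For $S\in\mathcal S(\Omega)$, its rank is the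 largest size of a member of $\mathcal I$ contained in $S$. $Z$ is tight if it is nondegenerate and for every $S\in\mathcal S(\Omega)$ with $|S|=|\Omega|-1$, letting $\omega$ be the class disjoint from $S$, there is $x\in\omega$ with rank$(S\cup\{x\})=$ rank$(S)$. A sheltering matroid is a pair $Q=(M,\Omega)$ where $M$ is a matroid on $U$ and $\Omega$ a partition of $U$ such that for every independent set $I\in\mathcal S(\Omega)$ of $M$ and every skew pair $\{x,y\}$ of a class $\omega$ with $\omega\cap I=\emptyset$, $I\cup\{x\}$ or $I\cup\{y\}$ is independent in $M$. Then $\mathcal Z(Q)=(U,\Omega,\{I\in\mathcal S(\Omega): I\text{ independent in }M\})$ is a multimatroid, said to be sheltered by $Q$. $Q$ is strict if $r(M)\le|\Omega|$. A multimatroid $Z$ is binary if $Z=\mathcal Z(Q)$ for some sheltering matroid $Q=(M,\Omega)$ with $M$ representable over $GF(2)$, and strictly binary if moreover $Q$ can be chosen strict. *)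

From HB Require Import structures.
From mathcomp Require Import all_boot all_order all_algebra.
Set Implicit Arguments. Unset Strict Implicit. Unset Printing Implicit Defensive.
Import GRing.Theory.

Section Multimatroids.
Variable U : finType.

Definition subtransversal (Omega : {set {set U}}) (T : {set U}) : bool :=
  [forall w in Omega, #|T :&: w| <= 1].
Definition transversal (Omega : {set {set U}}) (T : {set U}) : bool :=
  [forall w in Omega, #|T :&: w| == 1].

Definition is_matroid (E : {set U}) (F : {set {set U}}) : Prop :=
  [/\ set0 \in F,
      (forall I : {set U}, I \in F -> I \subset E),
      (forall I J : {set U}, J \in F -> I \subset J -> I \in F) &
      (forall I J : {set U}, I \in F -> J \in F -> #|I| < #|J| ->
         exists2 x, x \in J :\: I & x |: I \in F)].

Definition skew_pair_cond (Omega : {set {set U}}) (F : {set {set U}}) : Prop :=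
  forall (I w : {set U}) (x y : U), I \in F -> subtransversal Omega I -> w \in Omega ->
    [disjoint I & w] -> x \in w -> y \in w -> x != y ->
    (x |: I \in F) \/ (y |: I \in F).

Definition multimatroid (Omega : {set {set U}}) (Ind : {set {set U}}) : Prop :=
  [/\ partition Omega [set: U],
      (forall I : {set U}, I \in Ind -> subtransversal Omega I),
      (forall T : {set U}, transversal Omega T ->
         is_matroid T [set I in Ind | I \subset T]) &
      skew_pair_cond Omega Ind].

Definition q_matroid (q : nat) (Omega Ind : {set {set U}}) : Prop :=
  multimatroid Omega Ind /\ forall w : {set U}, w \in Omega -> #|w| = q.

Definition nondegenerate (Omega : {set {set U}}) : Prop :=
  forall w : {set U}, w \in Omega -> 1 < #|w|.

Definition mrank (Ind : {set {set U}}) (S : {set U}) : nat :=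
  \max_(I in Ind | I \subset S) #|I|.

Definition tight (Omega Ind : {set {set U}}) : Prop :=
  nondegenerate Omega /\
  forall S w : {set U}, subtransversal Omega S -> #|S| = #|Omega|.-1 ->
    w \in Omega -> [disjoint S & w] ->
    exists2 x, x \in w & mrank Ind (x |: S) = mrank Ind S.

Definition sheltering (M Omega : {set {set U}}) : Prop :=
  [/\ is_matroid [set: U] M, partition Omega [set: U] & skew_pair_cond Omega M].

Definition sheltered_ind (M Omega : {set {set U}}) : {set {set U}} :=
  [set I in M | subtransversal Omega I].

Definition matroid_rank (M : {set {set U}}) : nat := \max_(I in M) #|I|.

(* column matroid over GF(2): S is independent iff the vectors col u, u in S,
   are linearly independent (i.e. the #|S| rows col u are row-free). *)
Definition col_indep (m : nat) (col : U -> 'rV['F_2]_m) (S : {set U}) : bool :=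
  \rank (\matrix_(i < #|S|, j < m) col (enum_val i) 0 j)%R == #|S|.

Definition column_matroid (m : nat) (col : U -> 'rV['F_2]_m) : {set {set U}} :=
  [set S | col_indep col S].

Definition binary_matroid (M : {set {set U}}) : Prop :=
  exists m (col : U -> 'rV['F_2]_m), M = column_matroid col.

Definition binary_mm (Omega Ind : {set {set U}}) : Prop :=
  exists M, [/\ sheltering M Omega, binary_matroid M & Ind = sheltered_ind M Omega].

Definition strictly_binary_mm (Omega Ind : {set {set U}}) : Prop :=
  exists M, [/\ sheltering M Omega, binary_matroid M,
                matroid_rank M <= #|Omega| & Ind = sheltered_ind M Omega].

End Multimatroids.

(* Condition (3): rows indexed by the finite set V (via enum_val on 'I_#|V|);
   lab v 0, lab v 1, lab v 2 = u_1(v), u_2(v), u_3(v). *)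
Definition unit_col (V : finType) (v : V) : 'rV['F_2]_#|V| :=
  (\row_(j < #|V|) (enum_val j == v)%:R)%R.
Definition A_col (V : finType) (A : V -> V -> 'F_2) (v : V) : 'rV['F_2]_#|V| :=
  (\row_(j < #|V|) A (enum_val j) v)%R.

Definition IAAI_sheltered (U : finType) (Omega Ind : {set {set U}}) : Prop :=
  exists M : {set {set U}},
    sheltering M Omega /\ Ind = sheltered_ind M Omega /\
    exists (V : finType) (A : V -> V -> 'F_2) (lab : V -> 'I_3 -> U),
      [/\ (forall x y, A x y = A y x),
          bijective (fun p : V * 'I_3 => lab p.1 p.2),
          Omega = [set [set lab v i | i : 'I_3] | v : V] &
          exists col : U -> 'rV['F_2]_#|V|,
            [/\ M = column_matroid col,
                (forall v, col (lab v (@Ordinal 3 0 isT)) = unit_col v),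
                (forall v, col (lab v (@Ordinal 3 1 isT)) = A_col A v) &
                (forall v, col (lab v (@Ordinal 3 2 isT)) = (A_col A v + unit_col v)%R)]].

From Pilot Require Import Defs.
From HB Require Import structures.
From mathcomp Require Import all_boot all_order all_algebra.
From mathcomp Require Import zify ring.
(* Re-import so that [transversal] means [Defs.transversal], not [finset]'s. *)
Import Defs.
Set Implicit Arguments. Unset Strict Implicit. Unset Printing Implicit Defensive.
Import GRing.Theory.

(* A tight 3-matroid is determined by its independent sets inside any set X
   meeting every class in two elements: if S is a transversal minus its element
   u, with class {b, x, u} and b, x in X, then of the three ranks of b |: S,
   x |: S, u |: S at least two exceed the rank of S (skew pairs) and at least
   one does not (tightness), so the last rank is a function of the first two;
   induction on the number of elements outside X matches the ranks of all
   transversals, hence the bases.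
   Given a binary representation c, choose a basis transversal B = {b_v} and in
   the class of each b_v an x_v with c x_v spanned by B - b_v (tightness).  In
   the basis B the vectors c b_v, c x_v become e_v and the columns a_v of a
   matrix A, so the matroid of (I | A | A + I) agrees with Z on X = B + {x_v}.
   The skew pairs of Z force A to be symmetric, and for a symmetric A the
   matroid of (I | A | A + I) is sheltering and tight: a failure of either
   property produces two vectors whose pairing by the alternating form
   q' A q + q A q' over GF(2) is 1, which is impossible.  Both are then tight
   3-matroids agreeing on X, hence equal. *)

Section ColumnMatroid.
Variables (U : finType) (m : nat) (col : U -> 'rV['F_2]_m).

Definition colmx (S : {set U}) : 'M['F_2]_(#|S|, m) :=
  (\matrix_(i < #|S|, j < m) col (enum_val i) 0 j)%R.

Lemma row_colmx (S : {set U}) i : row i (colmx S) = col (enum_val i).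
Proof. by apply/rowP => j; rewrite !mxE. Qed.

Lemma colmx_sub (S : {set U}) u : u \in S -> (col u <= colmx S)%MS.
Proof. by move=> uS; rewrite -(enum_rankK_in uS uS) -row_colmx row_sub. Qed.

Lemma colmx_subP (S : {set U}) n (X : 'M_(n, m)) :
  reflect (forall u, u \in S -> (col u <= X)%MS) (colmx S <= X)%MS.
Proof.
apply: (iffP row_subP) => [sub u uS|sub i].
  by have := sub (enum_rank_in uS u); rewrite row_colmx enum_rankK_in.
by rewrite row_colmx sub ?enum_valP.
Qed.

Lemma colmxS (S T : {set U}) : S \subset T -> (colmx S <= colmx T)%MS.
Proof. by move=> /subsetP ST; apply/colmx_subP => u /ST; apply: colmx_sub. Qed.

Lemma col_indepU1 (S : {set U}) x : col_indep col S -> x \notin S ->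
  col_indep col (x |: S) = ~~ (col x <= colmx S)%MS.
Proof.
move=> /eqP rS xS; rewrite /col_indep -/(colmx _).
have [leS eqS] := mxrank_leqif_sup (colmxS (subsetUr [set x] S)).
have spanU1 : (colmx (x |: S) <= colmx S)%MS = (col x <= colmx S)%MS.
  apply/idP/idP => [|cx]; first exact/submx_trans/colmx_sub/setU11.
  by apply/colmx_subP => u /setU1P[->|/colmx_sub].
have := rank_leq_row (colmx (x |: S)); rewrite -spanU1 -eqS rS.
move: leS; rewrite rS; set r := \rank _; clearbody r; rewrite cardsU1 xS.
move=> leSr lerS; apply/eqP/idP => [->|ne]; [by rewrite neq_ltn ltnSn | lia].
Qed.

Lemma col_indep_sub (S T : {set U}) :
  col_indep col T -> S \subset T -> col_indep col S.
Proof.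
move=> /eqP rT ST; rewrite /col_indep eqn_leq rank_leq_row /=.
have sub : (colmx T <= colmx S + colmx (T :\: S))%MS.
  apply/colmx_subP => u uT; have [uS|uS] := boolP (u \in S).
    exact: submx_trans (colmx_sub uS) (addsmxSl _ _).
  by apply: submx_trans (addsmxSr _ _); apply: colmx_sub; rewrite inE uS.
have := leq_trans (mxrankS sub) (mxrank_adds_leqif _ _).1; rewrite rT.
have := rank_leq_row (colmx (T :\: S)).
have : #|T :\: S| = #|T| - #|S| by rewrite cardsD (setIidPr ST).
have := subset_leq_card ST; rewrite -/(colmx S); lia.
Qed.

Lemma column_matroidP : is_matroid [set: U] (column_matroid col).
Proof.
split=> [|I _|I J|I J].
- rewrite inE /col_indep eqn_leq rank_leq_row.
  by apply: (@leq_trans 0); rewrite ?cards0.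
- exact: subsetT.
- by rewrite !inE => indJ /(col_indep_sub indJ).
rewrite !inE => indI indJ ltIJ.
have [/existsP[x /andP[xJI xI]]|/existsPn noext] :=
  boolP [exists x, (x \in J :\: I) && (x |: I \in column_matroid col)].
  by exists x.
suff sub : (colmx J <= colmx I)%MS.
  by move: (mxrankS sub); rewrite (eqP indI) (eqP indJ) leqNgt ltIJ.
apply/colmx_subP => u uJ; have [uI|uI] := boolP (u \in I); first exact: colmx_sub.
by have := noext u; rewrite !inE uI uJ (col_indepU1 indI) // negbK.
Qed.

End ColumnMatroid.

Section Rank.
Variables (U : finType) (F : {set {set U}}).

Lemma leq_card_mrank (I S : {set U}) : I \in F -> I \subset S -> #|I| <= mrank F S.
Proof.
move=> IF IS.
by apply: (leq_bigmax_cond (P := fun J => (J \in F) && (J \subset S))); rewrite IF IS.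
Qed.

Lemma mrank_witness (S : {set U}) : set0 \in F ->
  exists2 I, I \in F & I \subset S /\ #|I| = mrank F S.
Proof.
move=> F0; rewrite /mrank (bigmax_eq_arg set0) ?F0 ?sub0set //.
by case: arg_maxnP => [|I /andP[IF IS] _]; [rewrite F0 sub0set | exists I].
Qed.

Lemma mrank_le_card (S : {set U}) : mrank F S <= #|S|.
Proof. by apply/bigmax_leqP => I /andP[_ /subset_leq_card]. Qed.

Lemma mrankS (S T : {set U}) : S \subset T -> mrank F S <= mrank F T.
Proof.
move=> ST; apply/bigmax_leqP => I /andP[IF IS].
by rewrite leq_card_mrank // (subset_trans IS).
Qed.

Lemma mrankU1 (S : {set U}) x :
  (forall I J : {set U}, I \in F -> J \subset I -> J \in F) ->
  mrank F (x |: S) <= (mrank F S).+1.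
Proof.
move=> Fdown; apply/bigmax_leqP => I /andP[IF IS].
have IxF : I :\ x \in F by rewrite (Fdown I) ?subsetDl.
have IxS : I :\ x \subset S.
  apply/subsetP => u /setD1P[ux uI].
  by have := subsetP IS u uI; rewrite in_setU1 (negbTE ux).
have := leq_card_mrank IxF IxS; have := cardsD1 x I; case: (x \in I) => /=; lia.
Qed.

End Rank.

Section Partition.
Variables (U : finType) (Omega : {set {set U}}).
Hypothesis partO : partition Omega [set: U].

Let trivO : trivIset Omega.
Proof. by case/and3P: partO. Qed.

Lemma class_eq w w' u : w \in Omega -> w' \in Omega -> u \in w -> u \in w' -> w = w'.
Proof.
by move=> wO w'O uw uw'; rewrite -(def_pblock trivO wO uw) (def_pblock trivO w'O uw').
Qed.

Lemma pblock_class u : pblock Omega u \in Omega.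
Proof. by rewrite pblock_mem // (cover_partition partO) inE. Qed.

Lemma mem_pblock_class u : u \in pblock Omega u.
Proof. by rewrite mem_pblock (cover_partition partO) inE. Qed.

Lemma notin_class w w' x : w \in Omega -> w' \in Omega -> w' != w -> x \in w -> x \notin w'.
Proof. by move=> wO w'O /eqP ne xw; apply/negP => /(class_eq w'O wO)/(_ xw). Qed.

Lemma card_by_class (S : {set U}) : #|S| = \sum_(w in Omega) #|S :&: w|.
Proof.
rewrite -sum1_card (big_mkcond (fun u => u \in S)).
rewrite (eq_bigl [in cover Omega]); last by move=> u; rewrite (cover_partition partO) inE.
rewrite big_trivIset //; apply: eq_bigr => w _.
by rewrite -big_mkcondr sum1_card; apply: eq_card => u; rewrite !inE andbC.
Qed.

Lemma card_transversal_classes T : transversal Omega T -> #|T| = #|Omega|.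
Proof.
move=> /forallP tT; rewrite card_by_class -sum1_card; apply: eq_bigr => w wO.
by have := tT w; rewrite wO => /eqP.
Qed.

Lemma transversal_subtransversal T : transversal Omega T -> subtransversal Omega T.
Proof.
move=> /forallP tT; apply/forallP => w; apply/implyP => wO.
by have := tT w; rewrite wO => /eqP ->.
Qed.

Lemma transversal_meet T w : transversal Omega T -> w \in Omega -> exists2 u, u \in T & u \in w.
Proof.
move=> /forallP /(_ w) tT wO; move: tT; rewrite wO /= => /cards1P[u eu].
have : u \in T :&: w by rewrite eu inE.
by rewrite inE => /andP[uT uw]; exists u.
Qed.

Lemma transversal_class_uniq T w u u' : transversal Omega T -> w \in Omega ->
  u \in T -> u' \in T -> u \in w -> u' \in w -> u = u'.
Proof.
move=> /forallP /(_ w) tT wO uT u'T uw u'w; move: tT; rewrite wO /= => /cards1P[z ez].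
have : u \in T :&: w by rewrite inE uT uw.
have : u' \in T :&: w by rewrite inE u'T u'w.
by rewrite ez !inE => /eqP -> /eqP ->.
Qed.

Lemma transversalD1_disjoint T w u : transversal Omega T -> w \in Omega ->
  u \in T -> u \in w -> [disjoint T :\ u & w].
Proof.
move=> tT wO uT uw; rewrite -setI_eq0; apply/eqP/setP => u'; rewrite !inE.
apply/negbTE/andP => -[/andP[u'u u'T] u'w].
by rewrite (transversal_class_uniq tT wO u'T uT u'w uw) eqxx in u'u.
Qed.

Lemma card_transversalD1 T u : transversal Omega T -> u \in T -> #|T :\ u| = #|Omega|.-1.
Proof. by move=> tT uT; rewrite -(card_transversal_classes tT) (cardsD1 u T) uT. Qed.

Lemma card_subtransversal_disjoint (S w : {set U}) : subtransversal Omega S ->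
  w \in Omega -> [disjoint S & w] -> #|S| <= #|Omega|.-1.
Proof.
move=> /forallP sS wO dSw.
rewrite card_by_class (bigD1 w) //= (disjoint_setI0 dSw) cards0 add0n.
rewrite (cardsD1 w Omega) wO add1n /= -sum1_card.
have -> : \sum_(i in Omega :\ w) 1 = \sum_(i in Omega | i != w) 1.
  by apply: eq_bigl => i; rewrite !inE andbC.
by apply: leq_sum => i /andP[iO _]; have := sS i; rewrite iO.
Qed.

Lemma subtransversalS (S T : {set U}) : subtransversal Omega T -> S \subset T ->
  subtransversal Omega S.
Proof.
move=> /forallP sT ST; apply/forallP => w; apply/implyP => wO.
by apply: leq_trans (subset_leq_card (setSI w ST)) _; have := sT w; rewrite wO.
Qed.

Lemma subtransversalU1 (S w : {set U}) x : subtransversal Omega S -> w \in Omega ->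
  [disjoint S & w] -> x \in w -> subtransversal Omega (x |: S).
Proof.
move=> /forallP sS wO dSw xw; apply/forallP => w'; apply/implyP => w'O.
rewrite setIUl; have [->|ne] := eqVneq w' w.
  by rewrite (disjoint_setI0 dSw) setU0 (leq_trans (subset_leq_card (subsetIl _ _))) ?cards1.
suff -> : [set x] :&: w' = set0 by rewrite set0U; have := sS w'; rewrite w'O.
apply/setP => z; rewrite !inE; apply/andP => -[/eqP-> xw'].
by move: (notin_class wO w'O ne xw); rewrite xw'.
Qed.

Lemma near_transversal_meet (S w w' : {set U}) : subtransversal Omega S ->
  #|S| = #|Omega|.-1 -> w \in Omega -> [disjoint S & w] -> w' \in Omega -> w' != w ->
  #|S :&: w'| = 1.
Proof.
move=> sS cS wO dSw w'O ne.
have : #|S :&: w'| <= 1 by move/forallP: sS => /(_ w'); rewrite w'O.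
case e : #|S :&: w'| => [|[|//]] // _; exfalso.
have [x xw'] : exists x, x \in w'.
  by apply/set0Pn; apply: contraTneq w'O => ->; case/and3P: partO.
have dSw' : [disjoint S & w'] by rewrite -setI_eq0 -cards_eq0 e.
have xS : x \notin S by apply: contraL xw' => /(disjointFr dSw') ->.
have dxSw : [disjoint x |: S & w].
  rewrite -setI_eq0 setIUl (disjoint_setI0 dSw) setU0 setI_eq0 disjoints1.
  by apply: notin_class w'O wO _ xw'; rewrite eq_sym.
have := card_subtransversal_disjoint (subtransversalU1 sS w'O dSw' xw') wO dxSw.
have : 0 < #|Omega| by apply/card_gt0P; exists w.
by rewrite cardsU1 xS cS; lia.
Qed.

Lemma transversal_exchange T w u z : transversal Omega T -> w \in Omega ->
  u \in T -> u \in w -> z \in w -> transversal Omega (z |: T :\ u).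
Proof.
move=> tT wO uT uw zw; apply/forallP => w'; apply/implyP => w'O.
rewrite setIUl; have [->|ne] := eqVneq w' w.
  rewrite (disjoint_setI0 (transversalD1_disjoint tT wO uT uw)) setU0.
  by rewrite (setIidPl _) ?cards1 ?sub1set.
rewrite [_ :&: w'](_ : _ = set0) ?set0U; last first.
  apply/setP => y; rewrite !inE; apply/andP => -[/eqP-> zw'].
  by move: (notin_class wO w'O ne zw); rewrite zw'.
have -> : (T :\ u) :&: w' = T :&: w'.
  apply/setP => y; rewrite !inE; have [->|_] //= := eqVneq y u.
  by rewrite (negbTE (notin_class wO w'O ne uw)) andbF.
by move/forallP: tT => /(_ w'); rewrite w'O.
Qed.

End Partition.

Lemma card_exchange_outside_lt (U : finType) (T X : {set U}) u z :
  u \in T -> u \notin X -> z \in X -> #|(z |: T :\ u) :\: X| < #|T :\: X|.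
Proof.
move=> uT uX zX; apply: proper_card; rewrite properEneq; apply/andP; split.
  apply/eqP => e; have : u \in T :\: X by rewrite inE uX uT.
  by rewrite -e !inE eqxx /= orbF => /andP[_ /eqP uz]; rewrite uz zX in uX.
apply/subsetP => y; rewrite !inE => /andP[yX /orP[/eqP yz|/andP[_ yT]]].
  by rewrite yz zX in yX.
by rewrite yX yT.
Qed.

Definition tight_family (U : finType) (Omega F : {set {set U}}) : Prop :=
  [/\ set0 \in F, (forall I J : {set U}, I \in F -> J \subset I -> J \in F),
      (forall I, I \in F -> subtransversal Omega I), skew_pair_cond Omega F &
      (forall S w : {set U}, subtransversal Omega S -> #|S| = #|Omega|.-1 ->
         w \in Omega -> [disjoint S & w] ->
         exists2 x, x \in w & mrank F (x |: S) = mrank F S)].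

(* Exactly one of [p], [q], [s] equals [r], so [s] is determined by [p], [q]. *)
Lemma third_rank r p q s : r <= p <= r.+1 -> r <= q <= r.+1 -> r <= s <= r.+1 ->
  (r < p \/ r < q) -> (r < p \/ r < s) -> (r < q \/ r < s) ->
  [\/ p = r, q = r | s = r] -> s = if p == q then p.-1 else maxn p q.
Proof. by move=> ? ? ? ? ? ? [] ?; case: eqP => ?; rewrite ?maxnE; lia. Qed.

Section TightFamily.
Variables (U : finType) (Omega : {set {set U}}).
Hypothesis card3 : forall w, w \in Omega -> #|w| = 3.

Lemma class3_eq w b x y : w \in Omega -> b \in w -> x \in w -> y \in w ->
  b != x -> b != y -> x != y -> w = [set b; x; y].
Proof.
move=> wO bw xw yw bx b_y xy; apply/eqP; rewrite eq_sym eqEcard card3 //.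
rewrite !subUset !sub1set bw xw yw /= -setUA !cardsU1 cards1 !inE.
by rewrite (negbTE xy) (negbTE bx) (negbTE b_y).
Qed.

Lemma subtransversal_missing_class (S : {set U}) : subtransversal Omega S ->
  ~~ transversal Omega S -> exists2 w, w \in Omega & [disjoint S & w].
Proof.
move=> /forallP sS /forallPn[w]; rewrite negb_imply => /andP[wO ne]; exists w => //.
by have := sS w; rewrite wO -setI_eq0 -cards_eq0; move: ne; case: #|_| => [|[]].
Qed.

Variable F : {set {set U}}.
Hypothesis tightF : tight_family Omega F.

Lemma tight_family_extend (S : {set U}) : S \in F ->
  exists2 T, T \in F & transversal Omega T /\ S \subset T.
Proof.
case: tightF => _ _ Fsub Fskew _ SF.
case: (@arg_maxnP _ S (fun T => (T \in F) && (S \subset T)) (fun T => #|T|)).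
  by rewrite SF subxx.
move=> T /andP[TF ST] Tmax; exists T => //; split=> //; apply/negPn/negP => ntT.
have [w wO dTw] := subtransversal_missing_class (Fsub _ TF) ntT.
have [x [y [xw yw xy]]] : exists x y, [/\ x \in w, y \in w & x != y].
  by apply/card_gt1P; rewrite card3.
suff [z zw zTF] : exists2 z, z \in w & z |: T \in F.
  have zT : z \notin T by apply: contraL zw => /(disjointFr dTw) ->.
  have := Tmax (z |: T); rewrite zTF (subset_trans ST (subsetUr _ _)) => /(_ isT).
  by rewrite cardsU1 zT add1n /= ltnn.
by case: (Fskew T w x y TF (Fsub _ TF) wO dTw xw yw xy) => ?; [exists x | exists y].
Qed.

Lemma mrank_third (S : {set U}) w b x y : subtransversal Omega S ->
  #|S| = #|Omega|.-1 -> w \in Omega -> [disjoint S & w] -> w = [set b; x; y] ->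
  b != x -> b != y -> x != y ->
  mrank F (y |: S) = if mrank F (b |: S) == mrank F (x |: S)
                     then (mrank F (b |: S)).-1
                     else maxn (mrank F (b |: S)) (mrank F (x |: S)).
Proof.
case: tightF => F0 Fdown Fsub Fskew Ftight sS cS wO dSw ew bx b_y xy.
have bounds z : mrank F S <= mrank F (z |: S) <= (mrank F S).+1.
  by rewrite mrankS ?subsetUr ?mrankU1.
have skew z1 z2 : z1 \in w -> z2 \in w -> z1 != z2 ->
    mrank F S < mrank F (z1 |: S) \/ mrank F S < mrank F (z2 |: S).
  move=> z1w z2w ne; have [I IF [IS cI]] := mrank_witness S F0.
  have dIw : [disjoint I & w] := disjointWl IS dSw.
  have grow z : z \in w -> z |: I \in F -> mrank F S < mrank F (z |: S).
    move=> zw zIF; have zI : z \notin I by apply: contraL zw => /(disjointFr dIw) ->.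
    by have := leq_card_mrank zIF (setUS [set z] IS); rewrite cardsU1 zI cI.
  by case: (Fskew I w z1 z2 IF (Fsub _ IF) wO dIw z1w z2w ne) => zIF; [left | right];
    apply: grow.
have [bw xw yw] : [/\ b \in w, x \in w & y \in w] by rewrite ew !inE !eqxx ?orbT.
apply: third_rank (bounds b) (bounds x) (bounds y) (skew _ _ bw xw bx)
  (skew _ _ bw yw b_y) (skew _ _ xw yw xy) _.
have [z zw ez] := Ftight S w sS cS wO dSw.
move: zw; rewrite ew !inE => /orP[/orP[]|] /eqP ez'; rewrite -ez' ez.
- exact: Or31.
- exact: Or32.
- exact: Or33.
Qed.

End TightFamily.

Section Agreement.
Variables (U : finType) (Omega : {set {set U}}).
Hypothesis partO : partition Omega [set: U].
Hypothesis card3 : forall w, w \in Omega -> #|w| = 3.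
Variables (F G : {set {set U}}) (X : {set U}).
Hypothesis tightF : tight_family Omega F.
Hypothesis tightG : tight_family Omega G.
Hypothesis X_meets2 : forall w, w \in Omega -> 1 < #|w :&: X|.
Hypothesis agree_on_X : forall I : {set U}, I \subset X -> (I \in F) = (I \in G).

(* Induction on the number of elements of T outside X: the element u of T
   outside X can be traded for either of the two elements of its class in X,
   and mrank_third determines the rank of T from those two. *)
Lemma mrank_transversal_agree (T : {set U}) :
  transversal Omega T -> mrank F T = mrank G T.
Proof.
have [k] := ubnP #|T :\: X|; elim: k T => // k IH T ltk tT.
have [TX|/subsetPn[u uT uX]] := boolP (T \subset X).
  apply: eq_bigl => I; have [IT|] := boolP (I \subset T); last by rewrite !andbF.
  by rewrite !andbT agree_on_X // (subset_trans IT TX).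
have [wO uw] := (pblock_class partO u, mem_pblock_class partO u).
set w := pblock Omega u in wO uw.
have /card_gt1P[b [x [/setIP[bw bX] /setIP[xw xX] bx]]] := X_meets2 wO.
have bu : b != u by apply: contraNneq uX => <-.
have xu : x != u by apply: contraNneq uX => <-.
have ew := class3_eq card3 wO bw xw uw bx bu xu.
have sS := subtransversalS (transversal_subtransversal tT) (subsetDl T [set u]).
have cS := card_transversalD1 partO tT uT.
have dSw := transversalD1_disjoint tT wO uT uw.
have IHz z : z \in w -> z \in X -> mrank F (z |: T :\ u) = mrank G (z |: T :\ u).
  move=> zw zX; apply: IH (transversal_exchange partO tT wO uT uw zw).
  by rewrite ltnS in ltk; apply: leq_trans ltk; apply: card_exchange_outside_lt.
rewrite -(setD1K uT) (mrank_third tightF sS cS wO dSw ew bx bu xu).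
by rewrite (mrank_third tightG sS cS wO dSw ew bx bu xu) !IHz.
Qed.

Lemma tight_family_agree_sub : F \subset G.
Proof.
apply/subsetP => I IF; have [T TF [tT IT]] := tight_family_extend card3 tightF IF.
case: tightG => G0 Gdown _ _ _; apply: Gdown _ IT.
have [J JG [JT cJ]] := mrank_witness T G0.
rewrite -mrank_transversal_agree // in cJ.
have eF : mrank F T = #|T| by apply/eqP; rewrite eqn_leq mrank_le_card leq_card_mrank.
suff <- : J = T by [].
by apply/eqP; rewrite eqEcard JT cJ eF leqnn.
Qed.

End Agreement.

Lemma tight_family_agree (U : finType) (Omega F G : {set {set U}}) (X : {set U}) :
  partition Omega [set: U] -> (forall w, w \in Omega -> #|w| = 3) ->
  tight_family Omega F -> tight_family Omega G ->
  (forall w, w \in Omega -> 1 < #|w :&: X|) ->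
  (forall I : {set U}, I \subset X -> (I \in F) = (I \in G)) -> F = G.
Proof.
move=> partO card3 tF tG X2 agree; apply/eqP; rewrite eqEsubset.
rewrite !(tight_family_agree_sub partO card3 _ _ X2) //.
by move=> I IX; rewrite agree.
Qed.

Section ShelteredColumnMatroid.
Variables (U : finType) (m : nat) (col : U -> 'rV['F_2]_m) (Omega : {set {set U}}).
Hypothesis partO : partition Omega [set: U].
Let F := sheltered_ind (column_matroid col) Omega.

Lemma mem_sheltered_col (I : {set U}) :
  (I \in F) = col_indep col I && subtransversal Omega I.
Proof. by rewrite !inE. Qed.

Lemma sheltered_col0 : set0 \in F.
Proof.
have [M0 _ _ _] := column_matroidP col; move: M0; rewrite !inE => ->.
by apply/forallP => w; rewrite set0I cards0 implybT.
Qed.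

Lemma sheltered_col_sub (I J : {set U}) : I \in F -> J \subset I -> J \in F.
Proof.
rewrite !mem_sheltered_col => /andP[indI sI] JI.
by rewrite (col_indep_sub indI JI) (subtransversalS sI JI).
Qed.

Lemma mrank_span (S : {set U}) x : subtransversal Omega S ->
  (col x <= colmx col S)%MS -> mrank F (x |: S) = mrank F S.
Proof.
move=> sS spanx; apply/eqP; rewrite eqn_leq (mrankS F (subsetUr _ _)) andbT.
have [I IF [IS cI]] := mrank_witness S sheltered_col0.
move: (IF); rewrite mem_sheltered_col => /andP[indI sI].
have spanS : (colmx col S <= colmx col I)%MS.
  apply/colmx_subP => u uS; have [uI|uI] := boolP (u \in I); first exact: colmx_sub.
  have uIS : u |: I \subset S by rewrite subUset sub1set uS IS.
  apply: contraT => nu; have uIF : u |: I \in F.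
    by rewrite mem_sheltered_col col_indepU1 // nu (subtransversalS sS).
  by have := leq_card_mrank uIF uIS; rewrite cardsU1 uI cI ltnn.
rewrite -cI; apply/bigmax_leqP => J /andP[JF JS].
move: JF; rewrite mem_sheltered_col => /andP[/eqP <- _]; rewrite -(eqP indI) -/(colmx col I).
apply/mxrankS/colmx_subP => u /(subsetP JS) /setU1P[->|uS].
  exact: submx_trans spanx spanS.
exact: submx_trans (colmx_sub col uS) spanS.
Qed.

Lemma span_of_mrank (S : {set U}) x : S \in F -> x \notin S ->
  subtransversal Omega (x |: S) -> mrank F (x |: S) = mrank F S ->
  (col x <= colmx col S)%MS.
Proof.
move=> SF xS sxS eq_rank; apply: contraT => nx.
have xSF : x |: S \in F.
  by move: SF; rewrite !mem_sheltered_col => /andP[indS _]; rewrite col_indepU1 ?nx.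
have := leq_card_mrank xSF (subxx _); rewrite eq_rank cardsU1 xS.
by move/leq_trans/(_ (mrank_le_card F S)); rewrite ltnn.
Qed.

Lemma sheltered_col_tight_family :
  skew_pair_cond Omega (column_matroid col) ->
  (forall S w : {set U}, subtransversal Omega S -> #|S| = #|Omega|.-1 ->
     w \in Omega -> [disjoint S & w] -> exists2 x, x \in w & mrank F (x |: S) = mrank F S) ->
  tight_family Omega F.
Proof.
move=> skewM tightF; split=> //.
- exact: sheltered_col0.
- exact: sheltered_col_sub.
- by move=> I; rewrite mem_sheltered_col => /andP[].
move=> I w x y IF sI wO dIw xw yw xy.
have IM : I \in column_matroid col by move: IF; rewrite !inE => /andP[].
have [xIM|yIM] := skewM I w x y IM sI wO dIw xw yw xy; [left|right].
  by rewrite inE xIM (subtransversalU1 partO sI wO dIw xw).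
by rewrite inE yIM (subtransversalU1 partO sI wO dIw yw).
Qed.

Lemma sheltered_col_tight_family_span :
  skew_pair_cond Omega (column_matroid col) ->
  (forall S w : {set U}, subtransversal Omega S -> #|S| = #|Omega|.-1 ->
     w \in Omega -> [disjoint S & w] -> exists2 x, x \in w & (col x <= colmx col S)%MS) ->
  tight_family Omega F.
Proof.
move=> skewM spanT; apply: sheltered_col_tight_family => // S w sS cS wO dSw.
by have [x xw spanx] := spanT S w sS cS wO dSw; exists x => //; apply: mrank_span.
Qed.

End ShelteredColumnMatroid.

Section GF2Algebra.
Local Open Scope ring_scope.

Lemma F2_cases (x : 'F_2) : x = 0 \/ x = 1.
Proof. by case: x => [[|[|k]]] //= i; [left|right]; apply/val_inj. Qed.

Lemma F2_addxx (x : 'F_2) : x + x = 0.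
Proof. by rewrite addrr_pchar2 // pchar_Fp. Qed.

Lemma F2_addxx_mx m n (M : 'M['F_2]_(m, n)) : M + M = 0.
Proof. by apply/matrixP => i j; rewrite !mxE F2_addxx. Qed.

Lemma F2_oppr (x : 'F_2) : - x = x.
Proof. by apply/eqP; rewrite eq_sym -subr_eq0 opprK F2_addxx. Qed.

Lemma F2_neq0 (x : 'F_2) : x != 0 -> x = 1.
Proof. by case: (F2_cases x) => ->; rewrite ?eqxx. Qed.

Lemma colmx_mul0 (U : finType) m n (col : U -> 'rV['F_2]_m) (S : {set U})
    (z : 'M['F_2]_(m, n)) s :
  colmx col S *m z = 0 -> s \in S -> col s *m z = 0.
Proof.
move=> Sz0 sS; have := congr1 (row (enum_rank_in sS s)) Sz0.
by rewrite row_mul row_colmx enum_rankK_in // row0.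
Qed.

Lemma separating_form n k (X : 'M['F_2]_(k, n)) (r : 'rV['F_2]_n) : ~~ (r <= X)%MS ->
  exists z : 'cV_n, X *m z = 0 /\ (r *m z) 0 0 = 1.
Proof.
rewrite submxE => /eqP ne.
have [j nej] : exists j, (r *m cokermx X) 0 j != 0.
  apply/existsP; apply: contra_notT ne => /existsPn r0.
  by apply/rowP => j; rewrite [RHS]mxE; apply/eqP/negPn.
exists (cokermx X *m delta_mx j 0); split; first by rewrite mulmxA mulmx_coker mul0mx.
rewrite mulmxA; set M := r *m cokermx X.
rewrite [LHS]mxE (bigD1 j) //= big1 ?addr0.
  by rewrite [delta_mx _ _ _ _]mxE !eqxx mulr1; apply: F2_neq0.
by move=> i ne'; rewrite [delta_mx _ _ _ _]mxE (negbTE ne') mulr0.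
Qed.

Lemma F2_sub_col_mx n k (L : 'M['F_2]_(k, n)) (r1 r2 : 'rV['F_2]_n) :
  (r1 <= col_mx L r2)%MS -> (r1 <= L)%MS \/ ((r1 + r2)%R <= L)%MS.
Proof.
case/submxP => D ->; rewrite -[D]hsubmxK mul_row_col [rsubmx D]mx11_scalar mul_scalar_mx.
case: (F2_cases (rsubmx D 0 0)) => ->; first by left; rewrite scale0r addr0 submxMl.
by right; rewrite scale1r -addrA F2_addxx_mx addr0 submxMl.
Qed.

Definition symmul n (B : 'I_n -> 'I_n -> 'F_2) (f : 'I_n -> 'F_2) (k : 'I_n) : 'F_2 :=
  \sum_k' B k k' * f k'.

(* Over GF(2) the symmetric form f' (B f) + f (B f') is twice f (B f'). *)
Lemma symmul_pairing0 n (B : 'I_n -> 'I_n -> 'F_2) (f f' : 'I_n -> 'F_2) :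
  (forall i j, B i j = B j i) ->
  \sum_k (symmul B f k * f' k + f k * symmul B f' k) = 0.
Proof.
move=> symB; rewrite big_split /= -[RHS](F2_addxx (\sum_k f k * symmul B f' k)).
congr (_ + _); rewrite /symmul.
under eq_bigr do rewrite mulr_suml.
under [RHS]eq_bigr do rewrite mulr_sumr.
rewrite exchange_big /=; apply: eq_bigr => k _; apply: eq_bigr => k' _.
by rewrite symB mulrCA mulrA.
Qed.

(* Column [lab v i] of (I | A | A + I) is [ecoef i *: e_v + acoef i *: a_v]. *)
Definition ecoef (i : 'I_3) : 'F_2 := if val i == 1%N then 0 else 1.
Definition acoef (i : 'I_3) : 'F_2 := if val i == 0%N then 0 else 1.

(* Two vectors killed by the same nonzero form [(ecoef i, acoef i)] on GF(2)^2
   are parallel, so their symplectic product vanishes. *)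
Lemma coef_kernel_pairing0 (p q p' q' : 'F_2) (i : 'I_3) :
  ecoef i * p + acoef i * q = 0 -> ecoef i * p' + acoef i * q' = 0 ->
  q * p' + p * q' = 0.
Proof.
case: i => [[|[|[|k]]] Hi] //; rewrite /ecoef /acoef /= ?mul1r ?mul0r ?addr0 ?add0r.
- by move=> -> ->; rewrite mulr0 mul0r addr0.
- by move=> -> ->; rewrite mulr0 mul0r addr0.
move=> /eqP; rewrite addr_eq0 F2_oppr => /eqP ->.
by move=> /eqP; rewrite addr_eq0 F2_oppr => /eqP ->; rewrite mulrC F2_addxx.
Qed.

Lemma two_coefs_span n m (L : 'M['F_2]_(n, m)) (E K : 'rV['F_2]_m) (i j : 'I_3) : i != j ->
  ((ecoef i *: E + acoef i *: K)%R <= L)%MS -> ((ecoef j *: E + acoef j *: K)%R <= L)%MS ->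
  (E <= L)%MS /\ (K <= L)%MS.
Proof.
have KE : K = (E + K) + E by rewrite addrAC F2_addxx_mx add0r.
have EK : E = (E + K) + K by rewrite -addrA F2_addxx_mx addr0.
case: i => [[|[|[|?]]] ?] //; case: j => [[|[|[|?]]] ?] //; rewrite /ecoef /acoef /= => _;
  rewrite ?scale1r ?scale0r ?addr0 ?add0r => h1 h2; split => //.
all: first [by rewrite KE addmx_sub | by rewrite EK addmx_sub].
Qed.

Lemma sum_enum_delta (V : finType) (c : V) (f : 'I_#|V| -> 'F_2) :
  \sum_(k < #|V|) f k * (c == enum_val k)%:R = f (enum_rank c).
Proof.
rewrite (bigD1 (enum_rank c)) //= enum_rankK eqxx mulr1 big1 ?addr0 // => k ne.
by case: eqP => [e|]; [move: ne; rewrite e enum_valK eqxx | rewrite mulr0].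
Qed.

Lemma pairing_term0 (a b p q p' q' : 'F_2) (c c' : bool) :
  (c -> c' -> p = p' /\ q = q') ->
  a * p * c%:R * (b * q' * c'%:R) + a * q * c%:R * (b * p' * c'%:R) = 0.
Proof.
case: c; last by rewrite !mulr0 !mul0r addr0.
case: c'; last by rewrite !mulr0 addr0.
case=> // -> ->.
have -> : a * p' * 1%:R * (b * q' * 1%:R) = a * q' * 1%:R * (b * p' * 1%:R) by ring.
exact: F2_addxx.
Qed.

Lemma unit_col_delta (V : finType) (v : V) : unit_col v = delta_mx 0 (enum_rank v).
Proof.
apply/rowP => j; rewrite !mxE eqxx /=.
suff -> : (enum_val j == v) = (j == enum_rank v) by [].
by apply/eqP/eqP => [<-|->]; [rewrite enum_valK | rewrite enum_rankK].
Qed.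

Lemma sub_unit_cols (V : finType) n (M : 'M['F_2]_(n, #|V|)) (W : pred V)
    (r : 'rV['F_2]_#|V|) :
  (forall v, W v -> (unit_col v <= M)%MS) ->
  (forall k, ~~ W (enum_val k) -> r 0 k = 0) -> (r <= M)%MS.
Proof.
move=> unitsW r0; rewrite (row_sum_delta r); apply: summx_sub => k _.
have [Wk|nWk] := boolP (W (enum_val k)); last by rewrite r0 // scale0r sub0mx.
by apply: scalemx_sub; rewrite -(enum_valK k) -unit_col_delta unitsW.
Qed.

Lemma unit_cols_support (V : finType) n (M : 'M['F_2]_(n, #|V|)) (P : pred V)
    (r : 'rV['F_2]_#|V|) :
  (forall i, exists2 v, row i M = unit_col v & P v) ->
  (r <= M)%MS -> forall k, ~~ P (enum_val k) -> r 0 k = 0.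
Proof.
move=> rowsP /submxP[D ->] k nPk; rewrite mxE; apply: big1 => i _.
have [v rowv Pv] := rowsP i; have := congr1 (fun R : 'rV_#|V| => R 0 k) rowv.
rewrite !mxE => ->; case: eqP => [e|_]; last by rewrite mulr0.
by move: nPk; rewrite e Pv.
Qed.

End GF2Algebra.

Section Representation.
Local Open Scope ring_scope.
Variables (U : finType) (Omega : {set {set U}}) (V : finType) (A : V -> V -> 'F_2).
Variables (lab : V -> 'I_3 -> U) (g : U -> V * 'I_3) (col : U -> 'rV['F_2]_#|V|).
Hypothesis symA : forall x y, A x y = A y x.
Hypothesis labK : forall v i, g (lab v i) = (v, i).
Hypothesis gK : forall u, lab (g u).1 (g u).2 = u.
Hypothesis eO : Omega = [set [set lab v i | i : 'I_3] | v : V].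
Hypothesis partO : partition Omega [set: U].
Hypothesis col0 : forall v, col (lab v (@Ordinal 3 0 isT)) = unit_col v.
Hypothesis col1 : forall v, col (lab v (@Ordinal 3 1 isT)) = A_col A v.
Hypothesis col2 : forall v, col (lab v (@Ordinal 3 2 isT)) = A_col A v + unit_col v.

Definition vertex u := (g u).1.
Definition slot u := (g u).2.
Definition fiber v := [set lab v i | i : 'I_3].

Lemma col_labE v i : col (lab v i) = ecoef i *: unit_col v + acoef i *: A_col A v.
Proof.
case: i => [[|[|[|k]]] Hi] //; rewrite (bool_irrelevance Hi isT) /ecoef /acoef /=.
- by rewrite col0 scale1r scale0r addr0.
- by rewrite col1 scale1r scale0r add0r.
by rewrite col2 !scale1r addrC.
Qed.

Lemma colE u :
  col u = ecoef (slot u) *: unit_col (vertex u) + acoef (slot u) *: A_col A (vertex u).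
Proof. by rewrite -{1}(gK u) col_labE. Qed.

Lemma mem_fiber u v : (u \in fiber v) = (vertex u == v).
Proof.
apply/imsetP/eqP => [[i _ ->]|<-]; first by rewrite /vertex labK.
by exists (slot u); rewrite // /vertex /slot gK.
Qed.

Lemma fiber_class v : fiber v \in Omega.
Proof. by rewrite eO imset_f. Qed.

Lemma class_fiber w : w \in Omega -> exists v, w = fiber v.
Proof. by rewrite eO => /imsetP[v _ ->]; exists v. Qed.

Lemma lab_fiber v i : lab v i \in fiber v.
Proof. by rewrite mem_fiber /vertex labK. Qed.

Lemma fiber_inj : injective fiber.
Proof. by move=> u v e; have := lab_fiber u ord0; rewrite e mem_fiber /vertex labK => /eqP. Qed.

Lemma subtransversal_vertex_inj (I : {set U}) s s' : subtransversal Omega I ->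
  s \in I -> s' \in I -> vertex s = vertex s' -> s = s'.
Proof.
move=> /forallP /(_ (fiber (vertex s))); rewrite fiber_class /= => /card_le1_eqP le1 sI s'I e.
by apply: le1; rewrite inE ?sI ?s'I mem_fiber ?e eqxx.
Qed.

Definition Amul (f : 'I_#|V| -> 'F_2) : 'I_#|V| -> 'F_2 :=
  symmul (fun k k' => A (enum_val k) (enum_val k')) f.

Lemma Amul_pairing0 f f' : \sum_k (Amul f k * f' k + f k * Amul f' k) = 0.
Proof. by apply: symmul_pairing0 => k k'; rewrite symA. Qed.

Lemma AmulD f f' k : Amul (fun k => f k + f' k) k = Amul f k + Amul f' k.
Proof. by rewrite /Amul /symmul -big_split; apply: eq_bigr => k' _; rewrite mulrDr. Qed.

Lemma Amul_unit v k : Amul (fun k => (v == enum_val k)%:R) k = A (enum_val k) v.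
Proof. by rewrite /Amul /symmul sum_enum_delta enum_rankK. Qed.

Lemma unit_col_mul v (z : 'cV['F_2]_#|V|) : (unit_col v *m z) 0 0 = z (enum_rank v) 0.
Proof.
rewrite mxE (bigD1 (enum_rank v)) //= big1 => [|k ne].
  by rewrite !mxE enum_rankK eqxx mul1r addr0.
by rewrite !mxE; case: eqP => [e|]; [move: ne; rewrite -e enum_valK eqxx | rewrite mul0r].
Qed.

Lemma A_col_mul v (z : 'cV['F_2]_#|V|) :
  (A_col A v *m z) 0 0 = Amul (fun k => z k 0) (enum_rank v).
Proof. by rewrite mxE; apply: eq_bigr => k _; rewrite !mxE enum_rankK symA. Qed.

Lemma col_mul u (z : 'cV['F_2]_#|V|) : (col u *m z) 0 0 =
  ecoef (slot u) * z (enum_rank (vertex u)) 0 +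
  acoef (slot u) * Amul (fun k => z k 0) (enum_rank (vertex u)).
Proof. by rewrite colE mulmxDl -!scalemxAl -unit_col_mul -A_col_mul !mxE. Qed.

(* Every class [fiber k] other than the missing one meets [S] in some [s],
   and both forms vanish on [col s]. *)
Lemma near_transversal_pairing0 (S : {set U}) v (z z' : 'cV['F_2]_#|V|) k :
  subtransversal Omega S -> #|S| = #|Omega|.-1 -> [disjoint S & fiber v] ->
  colmx col S *m z = 0 -> colmx col S *m z' = 0 -> k != enum_rank v ->
  Amul (fun k => z k 0) k * z' k 0 + z k 0 * Amul (fun k => z' k 0) k = 0.
Proof.
move=> sS cS dS Sz Sz' kv.
have ne : fiber (enum_val k) != fiber v.
  by apply: contra kv => /eqP/fiber_inj <-; rewrite enum_valK.
have := near_transversal_meet partO sS cS (fiber_class v) dS (fiber_class _) ne.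
move/eqP/cards1P => [s es]; have : s \in S :&: fiber (enum_val k) by rewrite es inE.
rewrite inE mem_fiber => /andP[sS' /eqP vs].
have h : (col s *m z) 0 0 = 0 by rewrite (colmx_mul0 Sz sS') mxE.
have h' : (col s *m z') 0 0 = 0 by rewrite (colmx_mul0 Sz' sS') mxE.
rewrite !col_mul vs enum_valK in h h'.
exact: coef_kernel_pairing0 h h'.
Qed.

(* If no column of the missing class were spanned by [S], forms [z], [z'] would
   separate [e_v] and [a_v] from the span of [S] and of each other; their
   symmetric pairing is then 1 at [v] and 0 at every other vertex. *)
Lemma representation_tight (S w : {set U}) : subtransversal Omega S ->
  #|S| = #|Omega|.-1 -> w \in Omega -> [disjoint S & w] ->
  exists2 x, x \in w & (col x <= colmx col S)%MS.
Proof.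
move=> sS cS wO dSw; have [v ew] := class_fiber wO; subst w.
have [/existsP[i Hi]|/existsPn none] := boolP [exists i : 'I_3, (col (lab v i) <= colmx col S)%MS].
  by exists (lab v i); rewrite ?lab_fiber.
exfalso; set L := colmx col S.
have nE : ~~ (unit_col v <= col_mx L (A_col A v))%MS.
  apply/negP => /F2_sub_col_mx[h|h]; first by move: (none (@Ordinal 3 0 isT)); rewrite col0 h.
  by move: (none (@Ordinal 3 2 isT)); rewrite col2 addrC h.
have nA : ~~ (A_col A v <= col_mx L (unit_col v))%MS.
  apply/negP => /F2_sub_col_mx[h|h]; first by move: (none (@Ordinal 3 1 isT)); rewrite col1 h.
  by move: (none (@Ordinal 3 2 isT)); rewrite col2 h.
have [z []] := separating_form nE; rewrite mul_col_mx => /eqP.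
rewrite col_mx_eq0 => /andP[/eqP Lz /eqP Az] ez.
have [z' []] := separating_form nA; rewrite mul_col_mx => /eqP.
rewrite col_mx_eq0 => /andP[/eqP Lz' /eqP Ez'] az'.
have := Amul_pairing0 (fun k => z k 0) (fun k => z' k 0).
rewrite (bigD1 (enum_rank v)) //= big1 => [|k kv]; last first.
  exact: near_transversal_pairing0 sS cS dSw Lz Lz' kv.
rewrite unit_col_mul in ez; rewrite A_col_mul in az'.
have Az0 : Amul (fun k => z k 0) (enum_rank v) = 0 by rewrite -A_col_mul Az mxE.
have Ez0 : z' (enum_rank v) 0 = 0 by rewrite -unit_col_mul Ez' mxE.
rewrite Az0 Ez0 ez az' mul0r mul1r add0r addr0 => /eqP; by rewrite oner_eq0.
Qed.

Lemma representation_rank : (matroid_rank (column_matroid col) <= #|Omega|)%N.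
Proof.
apply/bigmax_leqP => I; rewrite inE => /eqP <-.
by rewrite (leq_trans (rank_leq_col _)) // eO card_imset //; apply: fiber_inj.
Qed.

Section Combination.
Variable I : {set U}.

(* For a row [D] of coefficients on [I], [D *m colmx col I] splits, vertex by
   vertex, into its [e]-part [ecomb D] and its [a]-part [acomb D]. *)
Definition ecomb (D : 'rV['F_2]_#|I|) (k : 'I_#|V|) : 'F_2 :=
  \sum_(i < #|I|) D 0 i * ecoef (slot (enum_val i)) * (vertex (enum_val i) == enum_val k)%:R.
Definition acomb (D : 'rV['F_2]_#|I|) (k : 'I_#|V|) : 'F_2 :=
  \sum_(i < #|I|) D 0 i * acoef (slot (enum_val i)) * (vertex (enum_val i) == enum_val k)%:R.

Lemma mul_colmxE (D : 'rV['F_2]_#|I|) k :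
  (D *m colmx col I) 0 k = ecomb D k + Amul (acomb D) k.
Proof.
rewrite mxE /Amul /symmul /acomb.
have -> : \sum_(k' < #|V|) A (enum_val k) (enum_val k') * (\sum_(i < #|I|) D 0 i *
      acoef (slot (enum_val i)) * (vertex (enum_val i) == enum_val k')%:R)
    = \sum_(i < #|I|) D 0 i * acoef (slot (enum_val i)) * A (enum_val k) (vertex (enum_val i)).
  rewrite (eq_bigr (fun k' => \sum_(i < #|I|) A (enum_val k) (enum_val k') *
    (D 0 i * acoef (slot (enum_val i)) * (vertex (enum_val i) == enum_val k')%:R)));
    last by move=> k' _; rewrite mulr_sumr.
  rewrite exchange_big /=; apply: eq_bigr => i _.
  rewrite -[in RHS](enum_rankK (vertex (enum_val i))).
  rewrite -(sum_enum_delta _ (fun k' =>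
    D 0 i * acoef (slot (enum_val i)) * A (enum_val k) (enum_val k'))).
  by apply: eq_bigr => k' _; ring.
rewrite /ecomb -big_split /=; apply: eq_bigr => i _.
by rewrite !mxE colE !mxE eq_sym; ring.
Qed.

Lemma comb_disjoint0 (D : 'rV['F_2]_#|I|) v : [disjoint I & fiber v] ->
  ecomb D (enum_rank v) = 0 /\ acomb D (enum_rank v) = 0.
Proof.
move=> dI; have off (i : 'I_#|I|) : (vertex (enum_val i) == enum_val (enum_rank v)) = false.
  by rewrite enum_rankK -mem_fiber (disjointFr dI (enum_valP i)).
by split; apply: big1 => i _; rewrite off mulr0.
Qed.

Lemma comb_pairing0 (D D' : 'rV['F_2]_#|I|) k : subtransversal Omega I ->
  ecomb D k * acomb D' k + acomb D k * ecomb D' k = 0.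
Proof.
move=> sI; rewrite /ecomb /acomb !big_distrlr -big_split /=; apply: big1 => i _.
rewrite -big_split /=; apply: big1 => i' _; apply: pairing_term0 => /eqP ei /eqP ei'.
have ee : enum_val i = enum_val i'.
  by apply: subtransversal_vertex_inj sI (enum_valP i) (enum_valP i') _; rewrite ei ei'.
by rewrite (enum_val_inj ee).
Qed.

End Combination.

(* If [e_v = D C_I] and [a_v = D' C_I], pairing [acomb D] with [acomb D' + e_v]
   via the symmetric form gives 1 at [v] and 0 elsewhere. *)
Lemma subtransversal_not_span_fiber (I : {set U}) v : subtransversal Omega I ->
  [disjoint I & fiber v] ->
  ~ ((unit_col v <= colmx col I)%MS /\ (A_col A v <= colmx col I)%MS).
Proof.
move=> sI dIv [/submxP[D eD] /submxP[D' eD']].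
pose delta (k : 'I_#|V|) : 'F_2 := (v == enum_val k)%:R.
have Ecomb k : Amul (acomb D) k = delta k + ecomb D k.
  have : unit_col v 0 k = (D *m colmx col I) 0 k by rewrite eD.
  by rewrite mul_colmxE mxE eq_sym /delta => ->; rewrite addrAC F2_addxx add0r.
have Acomb k : Amul (fun k => acomb D' k + delta k) k = ecomb D' k.
  have : A_col A v 0 k = (D' *m colmx col I) 0 k by rewrite eD'.
  rewrite mul_colmxE mxE AmulD Amul_unit => ->.
  by rewrite addrCA F2_addxx addr0.
have := Amul_pairing0 (acomb D) (fun k => acomb D' k + delta k).
under eq_bigr do rewrite Ecomb Acomb.
rewrite (bigD1 (enum_rank v)) //= big1 => [|k kv]; last first.
  have -> : delta k = 0 by rewrite /delta; case: eqP => // e; move: kv; rewrite e enum_valK eqxx.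
  by rewrite add0r addr0 comb_pairing0.
have [-> ->] := comb_disjoint0 D dIv; have [-> ->] := comb_disjoint0 D' dIv.
rewrite /delta enum_rankK eqxx addr0 add0r mulr1 mul0r !addr0 => /eqP.
by rewrite oner_eq0.
Qed.

Lemma representation_skew : skew_pair_cond Omega (column_matroid col).
Proof.
move=> I w x y; rewrite inE => indI sI wO dIw xw yw xy.
have [v ew] := class_fiber wO; subst w.
have xI : x \notin I by apply: contraL xw => /(disjointFr dIw) ->.
have yI : y \notin I by apply: contraL yw => /(disjointFr dIw) ->.
rewrite !inE !(col_indepU1 indI) //.
have [hx|] := boolP (col x <= colmx col I)%MS; last by left.
have [hy|] := boolP (col y <= colmx col I)%MS; last by right.
exfalso; apply: (subtransversal_not_span_fiber sI dIw).
move: xw yw hx hy; rewrite !mem_fiber => /eqP vx /eqP vy.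
have xy_slot : slot x != slot y.
  apply: contra xy => /eqP e; apply/eqP.
  by rewrite -(gK x) -(gK y) -/(vertex x) -/(vertex y) -/(slot x) -/(slot y) vx vy e.
rewrite !colE vx vy; exact: two_coefs_span xy_slot.
Qed.

End Representation.

Lemma representation_tight_strictly_binary (U : finType) (Omega Ind : {set {set U}}) :
  (forall w, w \in Omega -> #|w| = 3) ->
  IAAI_sheltered Omega Ind -> tight Omega Ind /\ strictly_binary_mm Omega Ind.
Proof.
move=> card3 [M [shelM [eInd [V [A [lab [symA [g labK gK] eO]]]]]]].
move=> [col [eM col0 col1 col2]].
have partO : partition Omega [set: U] by case: shelM.
have labK' v i : g (lab v i) = (v, i) := labK (v, i).
split.
  split=> [w /card3 -> //|].
  have skew := representation_skew symA labK' gK eO col0 col1 col2.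
  have spanT := representation_tight symA labK' gK eO partO col0 col1 col2.
  by case: (sheltered_col_tight_family_span partO skew spanT); rewrite -eM -eInd.
exists M; split=> //; first by exists #|V|, col.
by rewrite eM (representation_rank col labK' gK eO).
Qed.

Section BinaryToRepresentation.
Local Open Scope ring_scope.
Variables (U : finType) (Omega : {set {set U}}).
Hypothesis partO : partition Omega [set: U].
Hypothesis card3 : forall w, w \in Omega -> #|w| = 3.
Variables (m : nat) (c : U -> 'rV['F_2]_m).
Let F := sheltered_ind (column_matroid c) Omega.
Variable B : {set U}.
Hypothesis BF : B \in F.
Hypothesis tB : transversal Omega B.
Hypothesis tightF : tight_family Omega F.

Definition vertices : finType := {u : U | u \in B}.
Local Notation V := vertices.
Let bclass (v : V) := pblock Omega (val v).

Let bclass_class v : bclass v \in Omega.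
Proof. exact: pblock_class. Qed.

Let val_bclass v : val v \in bclass v.
Proof. exact: mem_pblock_class. Qed.

Lemma B_bclass u v : u \in B -> u \in bclass v -> u = val v.
Proof. by move=> uB uv; apply: transversal_class_uniq tB (bclass_class v) uB (valP v) uv _. Qed.

Lemma B_indep : col_indep c B.
Proof. by move: BF; rewrite mem_sheltered_col => /andP[]. Qed.

Variable x : V -> U.
Hypothesis x_class : forall v, x v \in bclass v.
Hypothesis x_span : forall v, (c (x v) <= colmx c (B :\ val v))%MS.
Variable y : V -> U.
Hypothesis y_class : forall v, y v \in bclass v.
Hypothesis y_neq_val : forall v, y v != val v.
Hypothesis y_neq_x : forall v, y v != x v.

Lemma x_neq_val v : x v != val v.
Proof.
apply: contraTneq (x_span v) => ->.
have indBv : col_indep c (B :\ val v) := col_indep_sub B_indep (subsetDl _ _).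
have := col_indepU1 indBv (negbT (setD11 (val v) B)).
by rewrite setD1K ?(valP v) // B_indep => <-.
Qed.

Lemma x_notin_B v : x v \notin B.
Proof. by apply: contraNN (x_neq_val v) => xB; rewrite (B_bclass xB (x_class v)). Qed.

Definition lab (v : V) (i : 'I_3) : U :=
  if val i == 0%N then val v else if val i == 1%N then x v else y v.

Lemma lab_class v i : lab v i \in bclass v.
Proof. by rewrite /lab; case: ifP => _; last case: ifP. Qed.

Lemma lab_inj v : injective (lab v).
Proof.
have xv := x_neq_val v; have yv := y_neq_val v; have yx := y_neq_x v.
move=> [[|[|[|?]]] ?] [[|[|[|?]]] ?] //; rewrite /lab /= => e; apply/val_inj => //=.
all: by [ case/negP: xv; apply/eqP; first [exact: e | exact: esym e]
        | case/negP: yv; apply/eqP; first [exact: e | exact: esym e]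
        | case/negP: yx; apply/eqP; first [exact: e | exact: esym e] ].
Qed.

Lemma lab_bij : bijective (fun p : V * 'I_3 => lab p.1 p.2).
Proof.
apply: inj_card_bij => [[v i] [v' i'] /= e|].
  have ev : v = v'.
    apply/val_inj/(B_bclass (valP v)); rewrite (class_eq partO (bclass_class v')
      (bclass_class v) (lab_class v' i')) -?e ?lab_class //.
  by subst v'; rewrite (lab_inj e).
rewrite card_prod card_ord card_sig.
have -> : #|[pred u | u \in B]| = #|Omega|.
  by rewrite -(card_transversal_classes partO tB); apply: eq_card.
rewrite -cardsT (card_partition partO) -sum1_card big_distrl /=.
by apply/eq_leq/eq_bigr => w wO; rewrite card3 // mul1n.
Qed.

Lemma fiber_lab v : [set lab v i | i : 'I_3] = bclass v.
Proof.
apply/eqP; rewrite eqEcard card3 ?bclass_class // card_imset ?card_ord ?leqnn ?andbT //.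
  by apply/subsetP => u /imsetP[i _ ->]; apply: lab_class.
exact: lab_inj.
Qed.

Lemma Omega_lab : Omega = [set [set lab v i | i : 'I_3] | v : V].
Proof.
apply/setP => w; apply/idP/imsetP => [wO|[v _ ->]]; last by rewrite fiber_lab bclass_class.
have [u uB uw] := transversal_meet tB wO; exists (exist _ u uB) => //.
by rewrite fiber_lab /bclass /= (def_pblock _ wO uw) //; case/and3P: partO.
Qed.

Definition basis_mx : 'M['F_2]_(#|V|, m) := \matrix_j c (val (enum_val j)).

Lemma basis_mx_eqmx : (basis_mx :=: colmx c B)%MS.
Proof.
apply/eqmxP/andP; split.
  by apply/row_subP => j; rewrite rowK colmx_sub ?(valP (enum_val j)).
apply/colmx_subP => u uB; have := row_sub (enum_rank (exist _ u uB : V)) basis_mx.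
by rewrite rowK enum_rankK.
Qed.

Lemma basis_mx_free : row_free basis_mx.
Proof.
rewrite /row_free basis_mx_eqmx (eqP B_indep) card_sig.
by apply/eqP/eq_card.
Qed.

Lemma x_in_basis v : (c (x v) <= basis_mx)%MS.
Proof. by rewrite basis_mx_eqmx (submx_trans (x_span v)) ?colmxS ?subsetDl. Qed.

(* [coords v], the coordinates of [c (x v)] in the basis [B], is column [v] of
   [A]. *)
Definition coords v : 'rV['F_2]_#|V| := c (x v) *m pinvmx basis_mx.
Definition adj (w v : V) : 'F_2 := coords v 0 (enum_rank w).

Lemma A_col_adj v : A_col adj v = coords v.
Proof. by apply/rowP => j; rewrite mxE /adj enum_valK. Qed.

(* The [None] branch never occurs since [lab] is a bijection. *)
Definition rep_col (u : U) : 'rV['F_2]_#|V| :=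
  if [pick p : V * 'I_3 | lab p.1 p.2 == u] is Some p
  then ecoef p.2 *: unit_col p.1 + acoef p.2 *: A_col adj p.1 else 0.

Lemma rep_col_lab v i : rep_col (lab v i) = ecoef i *: unit_col v + acoef i *: A_col adj v.
Proof.
rewrite /rep_col; case: pickP => [[v' i'] /eqP /= e|/(_ (v, i))]; last by rewrite eqxx.
have [f fK _] := lab_bij; have := fK (v', i'); rewrite /= e (fK (v, i)).
by case=> -> ->.
Qed.

Lemma rep_col_val v : rep_col (val v) = unit_col v.
Proof.
rewrite -[val v]/(lab v (@Ordinal 3 0 isT)) rep_col_lab /ecoef /acoef /=.
by rewrite scale1r scale0r addr0.
Qed.

Lemma rep_col_x v : rep_col (x v) = coords v.
Proof.
rewrite -[x v]/(lab v (@Ordinal 3 1 isT)) rep_col_lab /ecoef /acoef /=.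
by rewrite scale1r scale0r add0r A_col_adj.
Qed.

Definition basis_and_x : {set U} := B :|: [set x v | v : V].

Lemma rep_col_mul u : u \in basis_and_x -> rep_col u *m basis_mx = c u.
Proof.
rewrite inE => /orP[uB|/imsetP[v _ ->]]; last by rewrite rep_col_x mulmxKpV ?x_in_basis.
rewrite -[u]/(val (exist _ u uB : V)) rep_col_val unit_col_delta -rowE rowK.
by rewrite enum_rankK.
Qed.

Lemma colmx_rep (S : {set U}) : S \subset basis_and_x ->
  colmx c S = colmx rep_col S *m basis_mx.
Proof.
move=> /subsetP SX; apply/row_matrixP => i.
by rewrite row_mul !row_colmx rep_col_mul ?SX ?enum_valP.
Qed.

Lemma col_indep_rep (S : {set U}) : S \subset basis_and_x ->
  col_indep c S = col_indep rep_col S.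
Proof. by move=> SX; rewrite /col_indep -!/(colmx _ _) colmx_rep // mxrankMfree ?basis_mx_free. Qed.

Lemma span_rep (S : {set U}) u : S \subset basis_and_x -> u \in basis_and_x ->
  (c u <= colmx c S)%MS = (rep_col u <= colmx rep_col S)%MS.
Proof. by move=> SX uX; rewrite colmx_rep // -(rep_col_mul uX) submxMfree ?basis_mx_free. Qed.

Lemma B_sub_basis_and_x : B \subset basis_and_x.
Proof. exact: subsetUl. Qed.

Lemma x_in_basis_and_x v : x v \in basis_and_x.
Proof. by rewrite inE imset_f ?orbT. Qed.

Lemma rows_colmx_units (S : {set U}) (P : pred V) : S \subset B ->
  (forall v : V, val v \in S -> P v) ->
  forall i, exists2 v, row i (colmx rep_col S) = unit_col v & P v.
Proof.
move=> /subsetP SB SP i; have iS := enum_valP i.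
exists (exist _ (enum_val i) (SB _ iS) : V); last exact: SP.
by rewrite row_colmx -rep_col_val.
Qed.

Lemma unit_col_span (S : {set U}) v : val v \in S -> (unit_col v <= colmx rep_col S)%MS.
Proof. by rewrite -rep_col_val; apply: colmx_sub. Qed.

Lemma adj_diag v : adj v v = 0.
Proof.
have BvX : B :\ val v \subset basis_and_x.
  by rewrite (subset_trans (subsetDl _ _)) ?B_sub_basis_and_x.
have := x_span v; rewrite span_rep ?x_in_basis_and_x // rep_col_x => span_v.
apply: (unit_cols_support (P := fun u => u != v) _ span_v); last by rewrite enum_rankK eqxx.
apply: rows_colmx_units; first exact: subsetDl.
by move=> u; rewrite !inE (inj_eq val_inj) => /andP[].
Qed.

Section Symmetry.
Variables v w : V.
Hypothesis vw : v != w.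
Hypothesis adj_wv : adj w v = 1.

Let S0 := B :\ val v :\ val w.
Let I := x v |: S0.

Let S0_sub_B : S0 \subset B.
Proof. by rewrite /S0 !subDset subsetU ?subsetUr ?orbT. Qed.

Let I_sub_basis_and_x : I \subset basis_and_x.
Proof. by rewrite subUset sub1set x_in_basis_and_x (subset_trans S0_sub_B) ?B_sub_basis_and_x. Qed.

Let rows_S0 : forall i, exists2 u, row i (colmx rep_col S0) = unit_col u & (u != v) && (u != w).
Proof.
apply: rows_colmx_units S0_sub_B _ => u; rewrite !inE => /and3P[uw uv _].
by rewrite -!(inj_eq val_inj) uv uw.
Qed.

Let I_in_F : I \in F.
Proof.
have indS0 : col_indep rep_col S0.
  by rewrite -col_indep_rep ?(col_indep_sub B_indep) // (subset_trans S0_sub_B) ?B_sub_basis_and_x.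
have xS0 : x v \notin S0 by apply: contraNN (x_notin_B v); apply/subsetP.
rewrite mem_sheltered_col col_indep_rep // col_indepU1 // rep_col_x.
apply/andP; split.
  apply/negP => /(unit_cols_support rows_S0) /(_ (enum_rank w)).
  by rewrite enum_rankK eqxx andbF -/(adj w v) adj_wv => /(_ isT) /eqP; rewrite oner_eq0.
have sBv := subtransversalS (transversal_subtransversal tB) (subsetDl B [set val v]).
have dBv := transversalD1_disjoint tB (bclass_class v) (valP v) (val_bclass v).
have := subtransversalU1 partO sBv (bclass_class v) dBv (x_class v).
by move/subtransversalS; apply; rewrite setUS ?subsetDl.
Qed.

Let bclass_neq : bclass v != bclass w.
Proof.
apply: contra vw => /eqP e; apply/eqP/val_inj/esym/(B_bclass (valP w)).
by rewrite e val_bclass.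
Qed.

Let I_disjoint_w : [disjoint I & bclass w].
Proof.
rewrite -setI_eq0; apply/eqP/setP => u; rewrite inE [RHS]inE.
apply/negbTE/andP => -[]; rewrite /I /S0 !inE => /orP[/eqP->|/and3P[uw _ uB]] uw'.
  case/negP: bclass_neq.
  by rewrite (class_eq partO (bclass_class v) (bclass_class w) (x_class v) uw').
by rewrite (B_bclass uB uw') eqxx in uw.
Qed.

(* [coords v + e_w] vanishes at [v] (diagonal) and at [w] (since [adj w v = 1]),
   so it lies in the span of [S0]. *)
Let unit_w_span : (unit_col w <= colmx rep_col I)%MS.
Proof.
have ew : unit_col w = coords v + (coords v + unit_col w) by rewrite addrA F2_addxx_mx add0r.
rewrite ew addmx_sub //; first by rewrite -rep_col_x colmx_sub ?setU11.
apply: submx_trans (colmxS rep_col (subsetUr _ _)).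
apply: (sub_unit_cols (W := fun u => (u != v) && (u != w))) => [u /andP[uv uw]|k].
  by apply: unit_col_span; rewrite /S0 !inE !(inj_eq val_inj) uv uw (valP u).
rewrite negb_and !negbK => /orP[]/eqP e.
all: rewrite -(enum_valK k) e mxE [unit_col _ _ _]mxE enum_rankK.
  by rewrite -/(adj v v) adj_diag (negbTE vw) add0r.
by rewrite -/(adj w v) adj_wv eqxx F2_addxx.
Qed.

(* [b_w] cannot extend [I] since [e_w] is spanned, so by the skew pair [x_w]
   does; but if [adj v w = 0] then [coords w] would be spanned by [I] too. *)
Lemma adj_vw : adj v w = 1.
Proof.
case: tightF => _ _ Fsub skewF _.
have I_indep : col_indep rep_col I.
  by move: I_in_F; rewrite mem_sheltered_col col_indep_rep // => /andP[].
have extend_rep u : u \in basis_and_x -> u \notin I -> u |: I \in F ->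
    ~~ (rep_col u <= colmx rep_col I)%MS.
  move=> uX uI; have uIX : u |: I \subset basis_and_x by rewrite subUset sub1set uX I_sub_basis_and_x.
  by rewrite mem_sheltered_col col_indep_rep // col_indepU1 // => /andP[].
have notinI u : u \in bclass w -> u \notin I.
  by move=> uw; apply: contraL uw => /(disjointFr I_disjoint_w) ->.
have wx : val w != x w by rewrite eq_sym x_neq_val.
have [wIF|xIF] := skewF I (bclass w) (val w) (x w) I_in_F (Fsub _ I_in_F) (bclass_class w)
  I_disjoint_w (val_bclass w) (x_class w) wx.
  have := extend_rep _ (subsetP B_sub_basis_and_x _ (valP w)) (notinI _ (val_bclass w)) wIF.
  by rewrite rep_col_val unit_w_span.
have := extend_rep _ (x_in_basis_and_x w) (notinI _ (x_class w)) xIF; rewrite rep_col_x.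
have [avw0 /negP[]|//] := F2_cases (adj v w).
apply: (sub_unit_cols (W := fun u => u != v)) => [u uv|k].
  have [->|uw] := eqVneq u w; first exact: unit_w_span.
  apply: submx_trans (colmxS rep_col (subsetUr _ _)); apply: unit_col_span.
  by rewrite /S0 !inE !(inj_eq val_inj) uv uw (valP u).
by rewrite negbK => /eqP e; rewrite -(enum_valK k) e -/(adj v w) avw0.
Qed.

End Symmetry.

Lemma adj_sym v w : adj v w = adj w v.
Proof.
have [->//|vw] := eqVneq v w.
have [wv0|wv1] := F2_cases (adj w v); last by rewrite wv1 (adj_vw vw wv1).
have [vw0|vw1] := F2_cases (adj v w); first by rewrite wv0 vw0.
have wv : w != v by rewrite eq_sym.
by have := adj_vw wv vw1; rewrite wv0 => /eqP; rewrite eq_sym oner_eq0.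
Qed.

Lemma rep_col0 v : rep_col (lab v (@Ordinal 3 0 isT)) = unit_col v.
Proof. exact: rep_col_val. Qed.

Lemma rep_col1 v : rep_col (lab v (@Ordinal 3 1 isT)) = A_col adj v.
Proof. by rewrite A_col_adj; apply: rep_col_x. Qed.

Lemma rep_col2 v : rep_col (lab v (@Ordinal 3 2 isT)) = A_col adj v + unit_col v.
Proof. by rewrite rep_col_lab /ecoef /acoef /= !scale1r addrC. Qed.

Lemma rep_skew : skew_pair_cond Omega (column_matroid rep_col).
Proof.
have [g labK gK] := lab_bij; have labK' v i : g (lab v i) = (v, i) := labK (v, i).
exact: representation_skew adj_sym labK' gK Omega_lab rep_col0 rep_col1 rep_col2.
Qed.

Lemma rep_tight_family : tight_family Omega (sheltered_ind (column_matroid rep_col) Omega).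
Proof.
have [g labK gK] := lab_bij; have labK' v i : g (lab v i) = (v, i) := labK (v, i).
apply: sheltered_col_tight_family_span partO rep_skew _.
exact: representation_tight adj_sym labK' gK Omega_lab partO rep_col0 rep_col1 rep_col2.
Qed.

Lemma class_meets2_basis_and_x w : w \in Omega -> (1 < #|w :&: basis_and_x|)%N.
Proof.
rewrite Omega_lab => /imsetP[v _ ->]; rewrite fiber_lab.
apply/card_gt1P; exists (val v), (x v).
rewrite !in_setI val_bclass x_class x_in_basis_and_x (subsetP B_sub_basis_and_x _ (valP v)).
by rewrite eq_sym x_neq_val.
Qed.

Lemma sheltered_eq_rep : F = sheltered_ind (column_matroid rep_col) Omega.
Proof.
apply: tight_family_agree partO card3 tightF rep_tight_family class_meets2_basis_and_x _ => I IX.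
by rewrite !mem_sheltered_col col_indep_rep.
Qed.

Lemma basis_representation : IAAI_sheltered Omega F.
Proof.
exists (column_matroid rep_col); split.
  by split; [exact: column_matroidP | exact: partO | exact: rep_skew].
split; first exact: sheltered_eq_rep.
exists vertices, adj, lab; split; [exact: adj_sym | exact: lab_bij | exact: Omega_lab |].
by exists rep_col; split=> // v; [exact: rep_col0 | exact: rep_col1 | exact: rep_col2].
Qed.

End BinaryToRepresentation.

Lemma exists_third (U : finType) (w : {set U}) a b : #|w| = 3 -> a \in w -> b \in w ->
  exists y, [&& y \in w, y != a & y != b].
Proof.
move=> w3 aw bw; have : ~~ (w \subset [set a; b]).
  by apply: contraTN isT => /subset_leq_card; rewrite w3 cards2; case: (_ != _).
case/subsetPn=> y yw; rewrite !inE negb_or => /andP[ya yb].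
by exists y; rewrite yw ya yb.
Qed.

Lemma class_span_choice (U : finType) (Omega : {set {set U}}) m (c : U -> 'rV['F_2]_m)
    (B : {set U}) :
  partition Omega [set: U] ->
  tight_family Omega (sheltered_ind (column_matroid c) Omega) ->
  B \in sheltered_ind (column_matroid c) Omega -> transversal Omega B ->
  exists x : vertices B -> U, (forall v, x v \in pblock Omega (val v)) /\
                              (forall v, (c (x v) <= colmx c (B :\ val v))%MS).
Proof.
move=> partO [_ _ _ _ tightF] BF tB.
have xex (v : vertices B) : exists x,
    (x \in pblock Omega (val v)) && (c x <= colmx c (B :\ val v))%MS.
  have sBv := subtransversalS (transversal_subtransversal tB) (subsetDl B [set val v]).
  have cBv := card_transversalD1 partO tB (valP v).
  have wO := pblock_class partO (val v).
  have dBv := transversalD1_disjoint tB wO (valP v) (mem_pblock_class partO (val v)).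
  have [x xw eq_rank] := tightF _ _ sBv cBv wO dBv.
  have xBv : x \notin B :\ val v by apply: contraL xw => /(disjointFr dBv) ->.
  have sxBv := subtransversalU1 partO sBv wO dBv xw.
  exists x; rewrite xw.
  exact: span_of_mrank (sheltered_col_sub BF (subsetDl _ _)) xBv sxBv eq_rank.
exists (fun v => xchoose (xex v)).
by split=> v; have /andP[] := xchooseP (xex v).
Qed.

Lemma tight_binary_representation (U : finType) (Omega Ind : {set {set U}}) :
  partition Omega [set: U] -> (forall w, w \in Omega -> #|w| = 3) ->
  tight Omega Ind -> binary_mm Omega Ind -> IAAI_sheltered Omega Ind.
Proof.
move=> partO card3 [_ tightInd] [M [[_ _ skewM] [m [c eM]] eInd]].
have eIF : Ind = sheltered_ind (column_matroid c) Omega by rewrite eInd eM.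
have tightF : tight_family Omega (sheltered_ind (column_matroid c) Omega).
  by apply: sheltered_col_tight_family partO _ _; rewrite -eM ?eInd in tightInd *.
have [B BF [tB _]] := tight_family_extend card3 tightF (sheltered_col0 c Omega).
have [x [x_class x_span]] := class_span_choice partO tightF BF tB.
have yex v := exists_third (card3 _ (pblock_class partO (val v)))
  (mem_pblock_class partO (val v)) (x_class v).
pose y v := xchoose (yex v).
have y_class v : y v \in pblock Omega (val v) by case/and3P: (xchooseP (yex v)).
have y_neq_val v : y v != val v by case/and3P: (xchooseP (yex v)).
have y_neq_x v : y v != x v by case/and3P: (xchooseP (yex v)).
rewrite eIF.
apply: (basis_representation partO card3 BF tB tightF x_class x_span y_class y_neq_val y_neq_x).
Qed.

Theorem theorem2p10 (U : finType) (Omega Ind : {set {set U}}) :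
  q_matroid 3 Omega Ind ->
  [/\ (tight Omega Ind /\ binary_mm Omega Ind) <->
        (tight Omega Ind /\ strictly_binary_mm Omega Ind),
      (tight Omega Ind /\ strictly_binary_mm Omega Ind) <->
        IAAI_sheltered Omega Ind &
      IAAI_sheltered Omega Ind <->
        (tight Omega Ind /\ binary_mm Omega Ind)].
Proof.
move=> [[partO _ _ _] card3].
have bin_of_strict : tight Omega Ind /\ strictly_binary_mm Omega Ind ->
    tight Omega Ind /\ binary_mm Omega Ind.
  by case=> tightI [M [shelM binM _ eInd]]; split=> //; exists M.
have rep_of_bin : tight Omega Ind /\ binary_mm Omega Ind -> IAAI_sheltered Omega Ind.
  by case=> tightI binI; apply: tight_binary_representation.
have strict_of_rep := @representation_tight_strictly_binary U Omega Ind card3.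
split; split.
- by move/rep_of_bin/strict_of_rep.
- exact: bin_of_strict.
- by move/bin_of_strict/rep_of_bin.
- exact: strict_of_rep.
- by move/strict_of_rep/bin_of_strict.
- exact: rep_of_bin.
Qed.
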